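(* For every $n\ge 3$, $\rho_T(C_n)\le 3$, where $C_n$ is the cycle on $n$ vertices.
   Context: Graphs are finite and simple. For $u,v\in(\mathbb{R}\cup\{\infty\})^k$ the min-plus tropical dot product is $u\odot v=\min_i(u_i+v_i)$. A min-plus $k$-tropical dot product representation of $G=(V,E)$ is a map $f:V\to(\mathbb{R}\cup\{\infty\})^k$ with a threshold $t>0$ such that for all distinct $x,y\in V$: $xy\in E$ iff $f(x)\odot f(y)\ge t$. $\rho_T(G)$ is the least $k\ge 1$ for which such a representation exists. *)

From Stdlib Require Import Reals Lra Lia Arith.
Open Scope R_scope.

(* Extended reals R ∪ {∞}: Some r = r, None = ∞. *)
Definition ereal := option R.

Definition eadd (a b : ereal) : ereal :=
  match a, b with Some x, Some y => Some (x + y) | _, _ => None end.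

Definition emin (a b : ereal) : ereal :=
  match a, b with
  | None, _ => b
  | _, None => a
  | Some x, Some y => Some (Rmin x y)
  end.

Definition ege (a : ereal) (t : R) : Prop :=
  match a with None => True | Some x => t <= x end.

(* vectors in (R ∪ {∞})^k are functions nat -> ereal, coordinates 0..k-1 *)
Definition tvec := nat -> ereal.

(* min-plus tropical dot product over coordinates 0..k-1 (k >= 1 assumed):
   tdot k u v = min_{i<k} (u i + v i); for k = 0 it is ∞ (unused). *)
Fixpoint tdot (k : nat) (u v : tvec) : ereal :=
  match k with
  | O => None
  | S k' => emin (tdot k' u v) (eadd (u k') (v k'))
  end.

Definition graph_adj := nat -> nat -> Prop.

Definition trop_rep (n : nat) (adj : graph_adj) (k : nat) : Prop :=
  exists (f : nat -> tvec) (t : R), 0 < t /\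
    forall x y, (x < n)%nat -> (y < n)%nat -> x <> y ->
      (adj x y <-> ege (tdot k (f x) (f y)) t).

(* rho_T(G) <= m  iff  some 1 <= k <= m admits a representation
   (rho_T is the least such k >= 1). *)
Definition rhoT_le (n : nat) (adj : graph_adj) (m : nat) : Prop :=
  exists k, (1 <= k)%nat /\ (k <= m)%nat /\ trop_rep n adj k.

Definition cycle_adj (n : nat) : graph_adj :=
  fun x y => y = ((x + 1) mod n)%nat \/ x = ((y + 1) mod n)%nat.

(* Number the path 0 - 1 - ... - (n-2) and give vertex i the first two coordinates
   1 + a i and 1 - a i, where a i = (-1)^i (i+1).  With threshold 1 the two
   coordinates together say |a x + a y| <= 1, which for distinct x, y happens exactly
   when x and y are consecutive: same parity gives |a x + a y| = x + y + 2, opposite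
   parity gives |x - y|.  The apex n-1 is infinite in those coordinates and -1 in the
   third, where the two ends of the path carry 2 and every other path vertex 1. *)

From Stdlib Require Import Reals Lra Lia Arith.

Lemma ege_emin a b t : ege (emin a b) t <-> ege a t /\ ege b t.
Proof.
  destruct a as [x|], b as [y|]; simpl; try tauto.
  unfold Rmin; destruct (Rle_dec x y); split; intros; try split; try lra; tauto.
Qed.

Lemma ege_tdotS k u v t :
  ege (tdot (S k) u v) t <-> ege (tdot k u v) t /\ ege (eadd (u k) (v k)) t.
Proof. exact (ege_emin _ _ t). Qed.

Lemma ege_tdot3 u v t :
  ege (tdot 3 u v) t <->
  ege (eadd (u 0%nat) (v 0%nat)) t /\ ege (eadd (u 1%nat) (v 1%nat)) t /\
  ege (eadd (u 2%nat) (v 2%nat)) t.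
Proof. rewrite 3!ege_tdotS. simpl. tauto. Qed.

Lemma eadd_comm a b : eadd a b = eadd b a.
Proof. destruct a, b; simpl; try rewrite Rplus_comm; reflexivity. Qed.

Lemma tdot_comm k u v : tdot k u v = tdot k v u.
Proof. induction k as [|k IH]; simpl; [|rewrite IH, (eadd_comm (u k))]; reflexivity. Qed.

Definition alt (i : nat) : R := if Nat.even i then INR i + 1 else - (INR i + 1).

Lemma even_succ_neq i : Nat.even (S i) <> Nat.even i.
Proof. rewrite Nat.even_succ, <- Nat.negb_even. destruct (Nat.even i); discriminate. Qed.

Lemma INR_sub_le1_lt x y : (x < y)%nat -> INR y - INR x <= 1 <-> y = S x.
Proof.
  intro lt_xy. rewrite <- minus_INR by lia. split.
  - intro h. change 1 with (INR 1) in h. apply INR_le in h. lia.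
  - intros ->. replace (S x - x)%nat with 1%nat by lia. simpl; lra.
Qed.

Lemma Rabs_INR_sub_le1 x y :
  x <> y -> Rabs (INR x - INR y) <= 1 <-> y = S x \/ x = S y.
Proof.
  intro hxy. destruct (Nat.lt_total x y) as [l|[e|l]]; [|contradiction|].
  - rewrite Rabs_minus_sym, Rabs_right, INR_sub_le1_lt by
      (try apply Rge_minus, Rle_ge, le_INR; lia).
    intuition lia.
  - rewrite Rabs_right, INR_sub_le1_lt by
      (try apply Rge_minus, Rle_ge, le_INR; lia).
    intuition lia.
Qed.

Lemma alt_sum_le1_iff x y :
  x <> y -> Rabs (alt x + alt y) <= 1 <-> y = S x \/ x = S y.
Proof.
  intro hxy. pose proof (pos_INR x). pose proof (pos_INR y).
  destruct (Bool.bool_dec (Nat.even x) (Nat.even y)) as [same|opp].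
  - assert (far : 1 < Rabs (alt x + alt y)).
    { unfold alt; rewrite same; destruct (Nat.even y);
        [rewrite Rabs_right | rewrite Rabs_left]; lra. }
    split; [lra|].
    intros [e|e]; subst; exfalso; eapply even_succ_neq; [symmetry|]; exact same.
  - rewrite <- Rabs_INR_sub_le1 by exact hxy.
    unfold alt; destruct (Nat.even x), (Nat.even y); try congruence.
    + replace (INR x + 1 + - (INR y + 1)) with (INR x - INR y) by ring. reflexivity.
    + replace (- (INR x + 1) + (INR y + 1)) with (- (INR x - INR y)) by ring.
      rewrite Rabs_Ropp. reflexivity.
Qed.

Lemma Rabs_le1_iff_shifted_sums a b :
  Rabs (a + b) <= 1 <-> 1 <= (1 + a) + (1 + b) /\ 1 <= (1 - a) + (1 - b).
Proof. unfold Rabs; destruct (Rcase_abs (a + b)); split; intros; lra. Qed.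

Section CycleRepresentation.

Variable n : nat.
Hypothesis n_ge3 : (3 <= n)%nat.

Lemma cycle_adj_sym x y : cycle_adj n x y <-> cycle_adj n y x.
Proof. unfold cycle_adj; tauto. Qed.

Lemma cycle_adj_path x y :
  (x < n - 1)%nat -> (y < n - 1)%nat -> cycle_adj n x y <-> y = S x \/ x = S y.
Proof.
  intros hx hy. unfold cycle_adj.
  rewrite !Nat.mod_small, !Nat.add_1_r by lia. reflexivity.
Qed.

Lemma cycle_adj_apex y :
  (y < n - 1)%nat -> cycle_adj n (n - 1)%nat y <-> y = 0%nat \/ y = (n - 2)%nat.
Proof.
  intro hy. unfold cycle_adj.
  replace (n - 1 + 1)%nat with n by lia.
  rewrite Nat.Div0.mod_same, Nat.mod_small by lia. lia.
Qed.

Definition end_weight (i : nat) : R :=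
  if orb (i =? 0)%nat (i =? n - 2)%nat then 2 else 1.

Definition cycle_rep (i : nat) : tvec := fun k =>
  if (i =? n - 1)%nat then (if (k =? 2)%nat then Some (-1) else None)
  else Some (match k with
             | 0%nat => 1 + alt i
             | 1%nat => 1 - alt i
             | _ => end_weight i
             end).

Lemma end_weight_ge1 i : 1 <= end_weight i.
Proof. unfold end_weight. destruct (orb _ _); lra. Qed.

Lemma end_weight_apex_iff y :
  y = 0%nat \/ y = (n - 2)%nat <-> 1 <= -1 + end_weight y.
Proof.
  unfold end_weight.
  destruct (Nat.eqb_spec y 0), (Nat.eqb_spec y (n - 2)); simpl;
    split; intros; try lra; lia.
Qed.

Lemma cycle_rep_path x y :
  (x < n - 1)%nat -> (y < n - 1)%nat -> x <> y ->
  cycle_adj n x y <-> ege (tdot 3 (cycle_rep x) (cycle_rep y)) 1.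
Proof.
  intros hx hy hxy.
  rewrite cycle_adj_path, <- alt_sum_le1_iff, Rabs_le1_iff_shifted_sums, ege_tdot3
    by assumption.
  unfold cycle_rep. rewrite !(proj2 (Nat.eqb_neq _ _)) by lia. simpl.
  pose proof (end_weight_ge1 x). pose proof (end_weight_ge1 y).
  split; [intros [h0 h1]; repeat split; lra | tauto].
Qed.

Lemma cycle_rep_apex y :
  (y < n - 1)%nat ->
  cycle_adj n (n - 1)%nat y <-> ege (tdot 3 (cycle_rep (n - 1)%nat) (cycle_rep y)) 1.
Proof.
  intro hy.
  rewrite cycle_adj_apex, end_weight_apex_iff, ege_tdot3 by assumption.
  unfold cycle_rep. rewrite Nat.eqb_refl, (proj2 (Nat.eqb_neq y _)) by lia. simpl.
  tauto.
Qed.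

Lemma cycle_rep_correct x y :
  (x < n)%nat -> (y < n)%nat -> x <> y ->
  cycle_adj n x y <-> ege (tdot 3 (cycle_rep x) (cycle_rep y)) 1.
Proof.
  intros hx hy hxy.
  destruct (Nat.eq_dec x (n - 1)%nat) as [->|hx'].
  - apply cycle_rep_apex. lia.
  - destruct (Nat.eq_dec y (n - 1)%nat) as [->|hy'].
    + rewrite cycle_adj_sym, tdot_comm. apply cycle_rep_apex. lia.
    + apply cycle_rep_path; lia.
Qed.

End CycleRepresentation.

Theorem mainTheorem18 : forall n : nat, (3 <= n)%nat -> rhoT_le n (cycle_adj n) 3.
Proof.
  intros n hn. exists 3%nat. split; [lia | split; [lia |]].
  exists (cycle_rep n), 1. split; [lra |].
  exact (cycle_rep_correct n hn).
Qed.
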